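(* Let $\mathcal{C}$ be a finite set of latent classes with cardinality $N_{\mathcal{C}}$, let $\rho$ be the uniform distribution on $\mathcal{C}$, and for each $c\in\mathcal{C}$ let $\mathcal{D}_c$ be a distribution on a feature space $\mathcal{X}$. Let $N\ge1$ and let $k$ be an integer with $2\le k+1\le N_{\mathcal{C}}$. Then every encoder $f:\mathcal{X}\to\mathbb{R}^d$ satisfies $$L_{\mathrm{sup},k}(f)\le L^\mu_{\mathrm{sup},k}(f)\le\frac{k}{1-\tau_N^+}\big(L^N_{\mathrm{un}}(f)-\tau_N^+\log(N+1)\big),$$ where $\tau_N^+=\mathbb{P}[c_i=c\ \forall i\mid (c,c_1,\dots,c_N)\sim\rho^{\otimes(N+1)}]$.
   Context: Positive pairs are drawn from $\mathcal{D}_{\mathrm{sim}}(x,x^+)=\sum_{c}\rho(c)\mathcal{D}_c(x)\mathcal{D}_c(x^+)$ and negatives from $\mathcal{D}_{\mathrm{neg}}(x^-)=\sum_c\rho(c)\mathcal{D}_c(x^-)$. The unsupervised loss with $N$ negatives is $$L^N_{\mathrm{un}}(f)=\mathbb{E}_{(x,x^+)\sim\mathcal{D}_{\mathrm{sim}},\,X^-\sim\mathcal{D}_{\mathrm{neg}}^{\otimes N}}\Big[-\log\frac{\exp(f(x)^Tf(x^+))}{\exp(f(x)^Tf(x^+))+\sum_{x^-\in X^-}\exp(f(x)^Tf(x^-))}\Big].$$ A $(k+1)$-way task is a subset $\mathcal{T}\subseteq\mathcal{C}$ with $|\mathcal{T}|=k+1$; it induces $\mathcal{D}_{\mathcal{T}}(c)=\rho(c\mid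 c\in\mathcal{T})$ and $\mathcal{D}_{\mathcal{T}}(x,c)=\mathcal{D}_{\mathcal{T}}(c)\mathcal{D}_c(x)$. The supervised loss on $\mathcal{T}$ is $$L_{\mathrm{sup}}(f,\mathcal{T})=\inf_{W\in\mathbb{R}^{|\mathcal{T}|\times d}}\mathbb{E}_{(x,c)\sim\mathcal{D}_{\mathcal{T}}}\Big[-\log\frac{\exp((Wf(x))_c)}{\sum_{c'\in\mathcal{T}}\exp((Wf(x))_{c'})}\Big],$$ and $L^\mu_{\mathrm{sup}}(f,\mathcal{T})$ is the same expectation evaluated at the mean classifier $W^\mu$ with rows $W^\mu_{c,:}=\mathbb{E}_{x\sim\mathcal{D}_c}[f(x)]$, $c\in\mathcal{T}$. Finally $L_{\mathrm{sup},k}(f)=\mathbb{E}_{\mathcal{T}\sim\mathcal{D}^{k+1}}[L_{\mathrm{sup}}(f,\mathcal{T})]$ and $L^\mu_{\mathrm{sup},k}(f)=\mathbb{E}_{\mathcal{T}\sim\mathcal{D}^{k+1}}[L^\mu_{\mathrm{sup}}(f,\mathcal{T})]$, where $\mathcal{D}^{k+1}$ is the uniform distribution over subsets of $k+1$ distinct classes of $\mathcal{C}$. *)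

From HB Require Import structures.
From mathcomp Require Import all_boot all_order all_algebra.
From mathcomp Require Import all_classical all_reals all_analysis.
Set Implicit Arguments. Unset Strict Implicit. Unset Printing Implicit Defensive.
Import Order.TTheory GRing.Theory Num.Theory.
Import numFieldNormedType.Exports.
Local Open Scope classical_set_scope.
Local Open Scope ring_scope.

Section Contrastive.
Context {R : realType} {dX : measure_display} {X : measurableType dX}
  {C : finType} {dim : nat}.
Variable (D : C -> probability X R).
Variable (f : X -> 'rV[R]_dim).

Definition dotv (u v : 'rV[R]_dim) : R := \sum_(i < dim) u 0 i * v 0 i.

Definition rho (c : C) : R := #|C|%:R^-1.

Definition neg_int (g : X -> \bar R) : \bar R :=
  (\sum_(c : C) (rho c)%:E * \int[D c]_x g x)%E.

(* E_{X^- ~ D_neg^{(x) n}}[F X^-], as iterated integral over the n factors *)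
Fixpoint negs_int (n : nat) (F : seq X -> \bar R) : \bar R :=
  match n with
  | 0 => F [::]
  | n'.+1 => neg_int (fun x => negs_int n' (fun s => F (x :: s)))
  end.

Definition contrast_loss (x xp : X) (xs : seq X) : R :=
  - ln (expR (dotv (f x) (f xp)) /
        (expR (dotv (f x) (f xp)) + \sum_(y <- xs) expR (dotv (f x) (f y)))).

(* L^N_un(f); (x, x^+) ~ D_sim = sum_c rho(c) D_c(x) D_c(x^+) *)
Definition L_un (N : nat) : \bar R :=
  (\sum_(c : C) (rho c)%:E *
     \int[D c]_x \int[D c]_xp negs_int N (fun xs => (contrast_loss x xp xs)%:E))%E.

Definition rho_cond (T : {set C}) (c : C) : R :=
  rho c / \sum_(c' in T) rho c'.

Definition sup_loss (T : {set C}) (W : C -> 'rV[R]_dim) (x : X) (c : C) : R :=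
  - ln (expR (dotv (W c) (f x)) / \sum_(c' in T) expR (dotv (W c') (f x))).

Definition sup_risk (T : {set C}) (W : C -> 'rV[R]_dim) : \bar R :=
  (\sum_(c in T) (rho_cond T c)%:E * \int[D c]_x (sup_loss T W x c)%:E)%E.

(* L_sup(f, T): infimum over all linear classifiers W in R^{|T| x d}
   (rows indexed by c in T; rows outside T are irrelevant) *)
Definition L_sup (T : {set C}) : \bar R :=
  ereal_inf [set sup_risk T W | W in [set: C -> 'rV[R]_dim]].

Definition mean_classifier (c : C) : 'rV[R]_dim :=
  \row_(i < dim) fine (\int[D c]_x (f x 0 i)%:E)%E.

Definition L_sup_mu (T : {set C}) : \bar R := sup_risk T mean_classifier.

(* T ~ D^{k+1}: uniform over subsets of C with k+1 distinct classes *)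
Definition tasks (k : nat) : {set {set C}} := [set T : {set C} | #|T| == k.+1].

Definition L_sup_k (k : nat) : \bar R :=
  ((#|tasks k|%:R^-1)%:E * \sum_(T in tasks k) L_sup T)%E.

Definition L_sup_mu_k (k : nat) : \bar R :=
  ((#|tasks k|%:R^-1)%:E * \sum_(T in tasks k) L_sup_mu T)%E.

End Contrastive.

Definition tau_plus {R : realType} (C : finType) (N : nat) : R :=
  \sum_(cc : C * (N.-tuple C) | all (fun ci => ci == cc.1) cc.2)
     (@rho R C cc.1 * \prod_(i < N) @rho R C (tnth cc.2 i)).

(* The first inequality holds because the mean classifier is one of the linear
   classifiers in the infimum.

   For the second, write s_c(x) = f(x)^T mu_c and let l(c, c') be the expected
   binary loss ln(1 + exp(s_c' - s_c)) of the mean classifier on pairs of classes.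
   Since ln(a + b_1 + ... + b_m) - ln a <= sum_i (ln(a + b_i) - ln a), the
   mean-classifier loss on a task is at most the sum of the binary losses of its
   pairs, and averaging over uniform tasks weights every ordered pair of distinct
   classes by k / (n (n - 1)), with n = |C|.

   In the other direction, log-sum-exp is convex, so conditionally on the labels
   (c_1, ..., c_N) of the negatives, L_un is at least the loss in which each sample
   is replaced by its class mean.  When all c_i equal c (probability tau) that loss
   is ln(N + 1); otherwise it dominates the binary loss of every class occurring
   among the c_i, and by symmetry each c' != c gets total weight
   (1 - tau) / (n - 1).  Hence
     L_un >= tau ln(N + 1) + (1 - tau) / (n (n - 1)) * sum_{c != c'} l(c, c'),
   and the two estimates combine.  Jensen is applied through the tangent plane of
   log-sum-exp, whose affine part integrates exactly; the monotonicity of the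
   integral used for it requires no measurability of the nested integrands. *)
From HB Require Import structures.
From mathcomp Require Import all_boot all_order all_algebra.
From mathcomp Require Import all_classical all_reals all_analysis.
From mathcomp Require Import fingroup perm.
From mathcomp Require Import ring lra.
Import Order.TTheory GRing.Theory Num.Theory.
Local Open Scope classical_set_scope.
Local Open Scope ring_scope.

Section IntegralMonotone.
Context {d : measure_display} {T : measurableType d} {R : realType}.
Variable mu : {measure set T -> \bar R}.
Local Open Scope ereal_scope.

Lemma le_integral_nonmeasurable (F G : T -> \bar R) :
  (forall x, 0 <= F x) -> (forall x, G x <= F x) ->
  \int[mu]_x G x <= \int[mu]_x F x.
Proof.
move=> F0 GF; rewrite (integralE _ _ G).
apply: (@le_trans _ _ (\int[mu]_x G^\+ x)).
  rewrite -[leRHS]sube0 leeB// integral_ge0// => x _; exact: funeneg_ge0.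
rewrite ge0_integralTE; last by move=> x; exact: funepos_ge0.
rewrite ge0_integralTE//.
apply: ereal_sup_le => _ /= [h /= hG <-]; exists h => //= x.
by apply: le_trans (hG x) _; rewrite funeposE ge_max GF F0.
Qed.

End IntegralMonotone.

Section LogSumExp.
Context {R : realType} {I : Type}.
Implicit Types (s : seq I) (u v b : I -> R).

Lemma sum_expR_gt0 s v : (0 < size s)%N -> 0 < \sum_(i <- s) expR (v i).
Proof.
case: s => // i s _; rewrite big_cons ltr_wpDr ?expR_gt0 //.
by apply: sumr_ge0 => j _; exact: expR_ge0.
Qed.

(* Convexity of log-sum-exp: its tangent at [v], with gradient the softmax of [v]. *)
Lemma ln_sum_expR_tangent s u v : (0 < size s)%N ->
  ln (\sum_(i <- s) expR (v i)) +
  (\sum_(i <- s) expR (v i) * (u i - v i)) / \sum_(i <- s) expR (v i)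
  <= ln (\sum_(i <- s) expR (u i)).
Proof.
move=> s0; have Sv0 : 0 < \sum_(i <- s) expR (v i) by exact: sum_expR_gt0.
set Sv := \sum_(i <- s) expR (v i) in Sv0 *.
set M := (\sum_(i <- s) _) / Sv.
have key : expR M * Sv <= \sum_(i <- s) expR (u i).
  apply: (@le_trans _ _ (\sum_(i <- s)
      expR M * (expR (v i) + expR (v i) * (u i - v i) - expR (v i) * M))).
    rewrite -mulr_sumr; apply: ler_wpM2l; first exact: expR_ge0.
    rewrite !big_split /= sumrN -mulr_suml -/Sv /M.
    by rewrite [Sv * _]mulrC divfK ?gt_eqF // addrK.
  apply: ler_sum => i _.
  have -> : expR (u i) = expR M * (expR (v i) * expR (u i - v i - M)).
    by rewrite -!expRD; congr expR; ring.
  apply: ler_wpM2l; first exact: expR_ge0.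
  have := ler_wpM2l (expR_ge0 (v i)) (expR_ge1Dx (u i - v i - M)).
  rewrite mulrDr mulr1 mulrBr; lra.
have Su0 : 0 < \sum_(i <- s) expR (u i).
  by apply: lt_le_trans key; rewrite mulr_gt0 ?expR_gt0.
by rewrite -ler_expR expRD !lnK ?posrE // mulrC.
Qed.

Lemma ln_addr_sum_le a s b : 0 < a -> (forall i, 0 <= b i) ->
  ln (a + \sum_(i <- s) b i) - ln a <= \sum_(i <- s) (ln (a + b i) - ln a).
Proof.
move=> a0 b0; elim: s => [|i s IH]; first by rewrite !big_nil addr0 subrr.
rewrite !big_cons; set S := \sum_(j <- s) b j in IH *.
have S0 : 0 <= S by exact: sumr_ge0.
suff : ln (a + (b i + S)) + ln a <= ln (a + b i) + ln (a + S) by lra.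
rewrite -!lnM ?posrE ?ltr_wpDr ?addr_ge0 // ler_ln ?posrE ?mulr_gt0 ?ltr_wpDr ?addr_ge0 //.
have := mulr_ge0 (b0 i) S0; nra.
Qed.

End LogSumExp.

Lemma oppr_ln_expR_div {R : realType} (a s : R) : 0 < s -> - ln (expR a / s) = ln s - a.
Proof.
move=> s0; rewrite lnM ?posrE ?invr_gt0 ?expR_gt0 // lnV ?posrE //.
by rewrite expRK opprD opprK addrC.
Qed.

Lemma ln_expRD_le {R : realType} (a b : R) :
  ln (expR a + expR b) <= 1 + a + `|b - a|.
Proof.
have e2 : 2 <= expR 1 :> R by have := expR_ge1Dx (1 : R).
set w := a + `|b - a|.
have ea : expR a <= expR w by rewrite ler_expR lerDl.
have eb : expR b <= expR w by rewrite ler_expR -lerBlDl; exact: ler_norm.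
rewrite -addrA -ler_expR lnK ?posrE ?addr_gt0 ?expR_gt0 // expRD -/w.
have : 2 * expR w <= expR 1 * expR w by rewrite ler_pM2r ?expR_gt0.
lra.
Qed.

Lemma natrB1_neq0 {R : numFieldType} n : (1 < n)%N -> n%:R - 1 != 0 :> R.
Proof. by move=> n1; rewrite subr_eq0 pnatr_eq1 gtn_eqF. Qed.

Section TupleSums.
Context {R : realType} {C : finType}.

Lemma sum_tupleS n (F : seq C -> R) :
  \sum_(t : n.+1.-tuple C) F t = \sum_(c : C) \sum_(t : n.-tuple C) F (c :: t).
Proof.
rewrite pair_big /= (reindex (fun p : C * n.-tuple C => [tuple of p.1 :: p.2])) //=.
exists (fun t : n.+1.-tuple C => (thead t, [tuple of behead t])).
  by move=> [a t] _ /=; congr pair; exact: val_inj.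
by move=> t _; apply: val_inj => /=; case: t => -[|a s].
Qed.

Lemma sum_count_pred1 (P : pred C) (s : seq C) :
  (\sum_(c | P c) count (pred1 c) s)%N = count P s.
Proof.
elim: s => [|a s IH] /=; first by rewrite big1.
rewrite big_split /= IH; congr (_ + _)%N.
case Pa: (P a).
  by rewrite (bigD1 a) //= eqxx big1 // => c /andP[_ ca]; rewrite eq_sym (negPf ca).
by rewrite big1 // => c Pc; case: eqP => // ac; rewrite ac Pc in Pa.
Qed.

Variable c : C.

Lemma count_predC1_eq0 (s : seq C) : (count (predC1 c) s == 0%N) = all (pred1 c) s.
Proof. by elim: s => //= a s IH; case: (a == c); rewrite /= ?add0n. Qed.

Lemma all_pred1_tuple N (t : N.-tuple C) : all (pred1 c) t = (t == nseq_tuple N c).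
Proof.
apply/all_pred1P/eqP => [t_c|->]; last by rewrite /= size_nseq.
by apply: val_inj; rewrite /= t_c size_tuple.
Qed.

Lemma sum_tuple_nseq_split N (F : seq C -> R) :
  \sum_(t : N.-tuple C) F t =
  F (nseq N c) + \sum_(t : N.-tuple C | count (predC1 c) t != 0%N) F t.
Proof.
rewrite (bigID (fun t : N.-tuple C => count (predC1 c) t == 0%N)) /=.
by rewrite (big_pred1 (nseq_tuple N c)) // => t; rewrite /= count_predC1_eq0 all_pred1_tuple.
Qed.

Definition off_share (t : seq C) (c' : C) : R :=
  (count (pred1 c') t)%:R / (count (predC1 c) t)%:R.

Definition off_share_mass N (c' : C) : R :=
  \sum_(t : N.-tuple C | count (predC1 c) t != 0%N) off_share t c'.

Lemma sum_off_share (t : seq C) : count (predC1 c) t != 0%N ->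
  \sum_(c' | c' != c) off_share t c' = 1.
Proof.
by move=> t_c; rewrite -mulr_suml -natr_sum sum_count_pred1 divff ?pnatr_eq0.
Qed.

Lemma off_share_mass_perm N c1 c2 : c1 != c -> c2 != c ->
  off_share_mass N c1 = off_share_mass N c2.
Proof.
move=> c1c c2c; pose s := tperm c1 c2.
have sc : s c = c by rewrite tpermD // eq_sym.
have s_eq x y : (s x == s y) = (x == y) by rewrite (inj_eq (@perm_inj _ s)).
have inj_s : injective (fun t : N.-tuple C => map_tuple s t).
  by move=> t1 t2 /(congr1 val) /(inj_map (@perm_inj _ s)); exact: val_inj.
rewrite /off_share_mass (reindex_inj inj_s) /=; apply: eq_big => t.
  by rewrite count_map; congr (_ != _); apply: eq_count => y /=; rewrite -{1}sc s_eq.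
move=> _; rewrite /off_share !count_map; congr (_%:R / _%:R); apply: eq_count => y /=.
  by rewrite -{1}(tpermR c1 c2) s_eq.
by rewrite -{1}sc s_eq.
Qed.

Lemma sum_ne_const (x : R) : \sum_(c' | c' != c) x = x * (#|C|%:R - 1).
Proof.
have C0 : (0 < #|C|)%N by apply/card_gt0P; exists c.
rewrite sumr_const; have -> : #|[pred c' | c' != c]| = #|C|.-1 by exact: cardC1.
by rewrite -[x *+ _]mulr_natr -subn1 natrB.
Qed.

Lemma off_share_massE N c' : (1 < #|C|)%N -> c' != c ->
  off_share_mass N c' = (#|C|%:R ^+ N - 1) / (#|C|%:R - 1).
Proof.
move=> C1 c'c; have C10 : #|C|%:R - 1 != 0 :> R by exact: natrB1_neq0.
have total : \sum_(c'' | c'' != c) off_share_mass N c'' = #|C|%:R ^+ N - 1.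
  rewrite /off_share_mass exchange_big /=.
  rewrite (eq_bigr (fun _ => 1)) => [|t t_c]; last exact: sum_off_share.
  have := sum_tuple_nseq_split N (fun _ => 1).
  by rewrite sumr_const card_tuple natrX => ->; rewrite addrAC subrr add0r.
move: total; rewrite (eq_bigr (fun _ => off_share_mass N c')) => [|c'' c''c].
  by rewrite sum_ne_const => <-; rewrite mulfK.
exact: off_share_mass_perm.
Qed.

(* Split each [E t] among the classes [c' != c] occurring in [t], in proportion to
   their multiplicities; by symmetry every [c'] then receives the same total weight. *)
Lemma sum_tuple_ge_nseq_mem N (E : seq C -> R) (g : C -> R) : (1 < #|C|)%N ->
  (forall (t : N.-tuple C) c', c' != c -> c' \in (t : seq C) -> g c' <= E t) ->
  E (nseq N c) + (#|C|%:R ^+ N - 1) / (#|C|%:R - 1) * \sum_(c' | c' != c) g c'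
  <= \sum_(t : N.-tuple C) E t.
Proof.
move=> C1 gE; rewrite (sum_tuple_nseq_split N E) lerD2l mulr_sumr.
apply: (@le_trans _ _ (\sum_(t : N.-tuple C | count (predC1 c) t != 0%N)
    \sum_(c' | c' != c) off_share t c' * g c')).
  rewrite exchange_big /=; apply: ler_sum => c' c'c.
  by rewrite -mulr_suml -/(off_share_mass N c') off_share_massE.
apply: ler_sum => t t_c; rewrite -[leRHS]mul1r -(sum_off_share t t_c) mulr_suml.
apply: ler_sum => c' c'c; have [t_c'0|t_c'] := eqVneq (count (pred1 c') t) 0%N.
  by rewrite /off_share t_c'0 !mul0r.
apply: ler_wpM2l; first by rewrite divr_ge0.
by apply: gE; rewrite // -has_pred1 has_count lt0n.
Qed.

End TupleSums.

Section LabelMeans.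
Context {R : realType} {C : finType}.

Lemma rhoE (c : C) : @rho R C c = #|C|%:R^-1.
Proof. by []. Qed.

Lemma rho_ge0 (c : C) : 0 <= @rho R C c.
Proof. by rewrite invr_ge0. Qed.

Fixpoint labels_mean n (B : seq C -> R) : R :=
  match n with
  | 0 => B [::]
  | n'.+1 => \sum_(c : C) @rho R C c * labels_mean n' (fun s => B (c :: s))
  end.

Lemma labels_meanDM n (B K : seq C -> R) z :
  labels_mean n (fun s => B s + K s * z) = labels_mean n B + labels_mean n K * z.
Proof.
elim: n B K => [|n IH] B K //=; rewrite mulr_suml -big_split /=.
by apply: eq_bigr => c _; rewrite IH mulrDr mulrA.
Qed.

Lemma labels_meanE n (B : seq C -> R) :
  labels_mean n B = #|C|%:R^-1 ^+ n * \sum_(t : n.-tuple C) B t.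
Proof.
elim: n B => [|n IH] B /=.
  by rewrite expr0 mul1r (big_pred1 [tuple]) // => t; rewrite /= (tuple0 t); apply/esym/eqP.
by rewrite sum_tupleS exprS mulr_sumr; apply: eq_bigr => c _; rewrite IH mulrA.
Qed.

Lemma tau_plusE N : (0 < #|C|)%N -> @tau_plus R C N = #|C|%:R^-1 ^+ N.
Proof.
move=> C0; rewrite /tau_plus -(pair_big_dep xpredT (fun c (t : N.-tuple C) =>
  all (fun ci => ci == c) t) (fun c t => @rho R C c * \prod_(i < N) @rho R C (tnth t i))).
rewrite (eq_bigr (fun _ => #|C|%:R^-1 * #|C|%:R^-1 ^+ N)) => [|c _]; last first.
  rewrite (big_pred1 (nseq_tuple N c)) => [|t]; last exact: all_pred1_tuple.
  by rewrite prodr_const card_ord.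
rewrite sumr_const (_ : #|xpredT| = #|C|) // -[_ *+ #|C|]mulr_natl mulrA.
by rewrite mulfV ?mul1r // pnatr_eq0 -lt0n.
Qed.

End LabelMeans.

Section TaskAverages.
Context {R : realType} {C : finType} (k : nat).

Definition pair_task_count (c c' : C) : R :=
  \sum_(T in tasks k | (c \in T) && (c' \in T)) 1.

Lemma sum_tasks_pairs (J : C -> C -> R) :
  \sum_(T in tasks k) \sum_(c in T) \sum_(c' in T | c' != c) J c c' =
  \sum_(c : C) \sum_(c' | c' != c) pair_task_count c c' * J c c'.
Proof.
transitivity (\sum_(T in tasks k) \sum_(c : C) \sum_(c' | c' != c)
    (if (c \in T) && (c' \in T) then J c c' else 0)).
  apply: eq_bigr => T _; rewrite big_mkcond /=; apply: eq_bigr => c _.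
  by case: (c \in T) => /=; [rewrite big_mkcondl | rewrite big1].
rewrite exchange_big /=; apply: eq_bigr => c _.
rewrite exchange_big /=; apply: eq_bigr => c' _.
by rewrite -big_mkcondr /= mulr_suml; under [RHS]eq_bigr do rewrite mul1r.
Qed.

Lemma pair_task_countC c c' : pair_task_count c c' = pair_task_count c' c.
Proof. by rewrite /pair_task_count; apply: eq_bigl => T; rewrite [(c \in T) && _]andbC. Qed.

Lemma pair_task_count_perm c c' c2 : c != c' -> c2 != c' ->
  pair_task_count c c' = pair_task_count c2 c'.
Proof.
move=> cc' c2c'; pose s := tperm c c2.
have sc' : s c' = c' by rewrite tpermD // eq_sym.
have inj_s : injective (fun T : {set C} => s @: T) by apply: imset_inj; exact: perm_inj.
rewrite /pair_task_count (reindex_inj inj_s) /=; apply: eq_bigl => T.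
rewrite /tasks !inE card_imset; last exact: perm_inj.
rewrite -{1}sc' mem_imset; last exact: perm_inj.
by rewrite -{1}(tpermR c c2) -/s mem_imset //; exact: perm_inj.
Qed.

Lemma pair_task_count_const a b a' b' : a != b -> a' != b' ->
  pair_task_count a b = pair_task_count a' b'.
Proof.
move=> ab a'b'; have [a'b|a'b] := eqVneq a' b.
  have b'b : b' != b by rewrite eq_sym -a'b.
  by rewrite (pair_task_count_perm a b b') // pair_task_countC a'b.
rewrite (pair_task_count_perm a b a') // pair_task_countC.
by rewrite (pair_task_count_perm b a' b') 1?eq_sym // pair_task_countC.
Qed.

Lemma sum_pair_task_count :
  \sum_(c : C) \sum_(c' | c' != c) pair_task_count c c' =
  #|@tasks C k|%:R * (k.+1%:R * k%:R).
Proof.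
have := sum_tasks_pairs (fun _ _ => 1).
under [RHS]eq_bigr do under eq_bigr do rewrite mulr1.
move=> <-; rewrite -sumr_const mulr_suml; apply: eq_bigr => T.
rewrite /tasks inE => /eqP T_k; rewrite mul1r -T_k mulr_natl -sumr_const.
apply: eq_bigr => c cT.
have : \sum_(c' in T) (1 : R) = 1 + \sum_(c' in T | c' != c) 1 by rewrite (bigD1 c).
by rewrite sumr_const T_k => E; apply: (addrI 1); rewrite -E mulrS.
Qed.

Lemma pair_task_countE c c' : c' != c ->
  pair_task_count c c' =
  #|@tasks C k|%:R * (k.+1%:R * k%:R) / (#|C|%:R * (#|C|%:R - 1)).
Proof.
move=> c'c; have C1 : (1 < #|C|)%N by apply/card_gt1P; exists c', c.
have C10 : #|C|%:R * (#|C|%:R - 1) != 0 :> R.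
  by rewrite mulf_neq0 ?natrB1_neq0 // pnatr_eq0 -lt0n ltnW.
have ptc_cc' a b : b != a -> pair_task_count a b = pair_task_count c c'.
  by move=> ba; apply: pair_task_count_const; rewrite eq_sym.
rewrite -sum_pair_task_count.
under eq_bigr => a _ do under eq_bigr => b ba do rewrite (ptc_cc' a b ba).
under eq_bigr do rewrite sum_ne_const.
rewrite sumr_const (_ : #|xpredT| = #|C|) //.
by rewrite -[_ *+ #|C|]mulr_natr -mulrA [_ * #|C|%:R]mulrC mulfK.
Qed.

Lemma mean_tasks_pairs (J : C -> C -> R) : (1 < #|C|)%N -> (k.+1 <= #|C|)%N ->
  #|@tasks C k|%:R^-1 * \sum_(T in tasks k) \sum_(c in T)
      (k.+1%:R^-1 * \sum_(c' in T | c' != c) J c c')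
  = k%:R / (#|C|%:R * (#|C|%:R - 1)) * \sum_(c : C) \sum_(c' | c' != c) J c c'.
Proof.
move=> C1 kC; have tasks0 : #|@tasks C k|%:R != 0 :> R.
  by rewrite pnatr_eq0 -lt0n /tasks card_draws bin_gt0.
under eq_bigr do rewrite -mulr_sumr.
rewrite -mulr_sumr sum_tasks_pairs.
under eq_bigr => c _ do under eq_bigr => c' c'c do rewrite (pair_task_countE c c' c'c).
under eq_bigr do rewrite -mulr_sumr.
rewrite -mulr_sumr; field.
by rewrite natrB1_neq0 // tasks0 addrC natr1 !pnatr_eq0 -lt0n ltnW.
Qed.

Lemma rho_cond_task T c : T \in tasks k -> @rho_cond R C T c = k.+1%:R^-1.
Proof.
rewrite inE => /eqP T_k; have C0 : (0 < #|C|)%N by apply/card_gt0P; exists c.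
rewrite /rho_cond sumr_const T_k rhoE -[_ *+ k.+1]mulr_natr invfM mulrA.
by rewrite mulfV ?mul1r // invr_eq0 pnatr_eq0 -lt0n.
Qed.

End TaskAverages.

Lemma dotvC {R : realType} {n : nat} (u v : 'rV[R]_n) : dotv u v = dotv v u.
Proof. by apply: eq_bigr => i _; rewrite mulrC. Qed.

Section Encoder.
Context {R : realType} {dX : measure_display} {X : measurableType dX}
  {C : finType} {dim : nat}.
Variables (D : C -> probability X R) (f : X -> 'rV[R]_dim).
Hypothesis f_int : forall c i, (D c).-integrable [set: X] (fun x => (f x 0 i)%:E).

Local Notation mu := (mean_classifier D f).

Definition score x c := dotv (f x) (mu c).

Lemma integrable_dotv c u : (D c).-integrable setT (fun y => (dotv u (f y))%:E).
Proof.
have -> : (fun y => (dotv u (f y))%:E) =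
    (fun y => \sum_(i < dim) (u 0 i)%:E * (f y 0 i)%:E)%E.
  by apply/funext => y; rewrite -sumEFin; apply: eq_bigr => i _; rewrite EFinM.
by apply: integrable_sum => // i _; exact/integrableZl/f_int.
Qed.

Lemma integral_dotv c u : (\int[D c]_y (dotv u (f y))%:E = (dotv u (mu c))%:E)%E.
Proof.
under eq_integral do rewrite -sumEFin.
rewrite integral_sum // => [|i]; last first.
  by under eq_fun do rewrite EFinM; exact/integrableZl/f_int.
rewrite -sumEFin; apply: eq_bigr => i _.
under eq_integral do rewrite EFinM.
rewrite integralZl //; last exact: f_int.
by rewrite mxE EFinM fineK // (integrable_fin_num measurableT (f_int c i)).
Qed.

Lemma integral_dotv_affine c u a b :
  (\int[D c]_y (a + b * (dotv u (f y) - dotv u (mu c)))%:E = a%:E)%E.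
Proof.
have -> : (fun y => (a + b * (dotv u (f y) - dotv u (mu c)))%:E) =
    (fun y => (cst (a - b * dotv u (mu c))%:E) y + b%:E * (dotv u (f y))%:E)%E.
  by apply/funext => y; rewrite /= -EFinM -EFinD; congr EFin; ring.
rewrite integralD //; last 2 first.
- exact: finite_measure_integrable_cst.
- exact/integrableZl/integrable_dotv.
rewrite integralZl //; last exact: integrable_dotv.
rewrite integral_dotv integral_cst //= [X in (_ * X)%E](_ : _ = 1%E).
  by rewrite mule1 -EFinM -EFinD; congr EFin; ring.
exact: probability_setT.
Qed.

Lemma score_integrable c c' : (D c).-integrable setT (fun x => (score x c')%:E).
Proof. by under eq_fun do rewrite /score dotvC; exact: integrable_dotv. Qed.

Lemma measurable_score c : measurable_fun setT (score ^~ c).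
Proof.
apply/measurable_realfun.measurable_EFinP.
exact: measurable_int (score_integrable c c).
Qed.

Lemma negs_int_ge0 n (F : seq X -> \bar R) :
  (forall ys, 0 <= F ys)%E -> (0 <= negs_int D n F)%E.
Proof.
elim: n F => [|n IH] F F0 /=; first exact: F0.
apply: sume_ge0 => c _; apply: mule_ge0; first by rewrite lee_fin rho_ge0.
by apply: integral_ge0 => x _; apply: IH.
Qed.

(* Jensen over the negatives: an affine function of the similarities [dotv u (f y)]
   that is centred at the class means integrates to its constant part. *)
Lemma negs_int_ge_labels_mean u n (F : seq X -> \bar R) (B : seq C -> R)
    (Q : seq C -> C -> R) :
  (forall ys, 0 <= F ys)%E ->
  (forall ts ys, size ts = n -> size ys = n ->
     ((B ts + \sum_(p <- zip ts ys) Q ts p.1 * (dotv u (f p.2) - dotv u (mu p.1)))%:E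
       <= F ys)%E) ->
  ((labels_mean n B)%:E <= negs_int D n F)%E.
Proof.
elim: n F B Q => [|n IH] F B Q F0 FB /=.
  by have := FB [::] [::] erefl erefl; rewrite big_nil addr0.
rewrite -sumEFin; apply: lee_sum => c _.
rewrite EFinM; apply: lee_wpmul2l; first by rewrite lee_fin rho_ge0.
rewrite -(integral_dotv_affine c u (labels_mean n (fun s => B (c :: s)))
  (labels_mean n (fun s => Q (c :: s) c))).
apply: le_integral_nonmeasurable => y; first exact: negs_int_ge0.
rewrite -labels_meanDM; apply: (IH _ _ (fun s => Q (c :: s))) => // ts ys tsn ysn.
by have := FB (c :: ts) (y :: ys); rewrite /= tsn ysn big_cons /= addrA; apply.
Qed.

Lemma contrast_lossE x xp ys : contrast_loss f x xp ys =
  ln (expR (dotv (f x) (f xp)) + \sum_(y <- ys) expR (dotv (f x) (f y)))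
  - dotv (f x) (f xp).
Proof.
by rewrite /contrast_loss oppr_ln_expR_div // ltr_wpDr ?expR_gt0 ?sumr_ge0.
Qed.

Lemma contrast_loss_ge0 x xp ys : 0 <= contrast_loss f x xp ys.
Proof.
have S0 : 0 <= \sum_(y <- ys) expR (dotv (f x) (f y)) by exact: sumr_ge0.
rewrite contrast_lossE subr_ge0 -[leLHS]expRK.
by rewrite ler_ln ?posrE ?ltr_wpDr ?expR_gt0 // lerDl.
Qed.

Definition mean_contrast x c (ts : seq C) :=
  ln (expR (score x c) + \sum_(t <- ts) expR (score x t)) - score x c.

Lemma integral_negs_contrast_loss_ge x c N :
  ((labels_mean N (mean_contrast x c))%:E <=
   \int[D c]_xp negs_int D N (fun xs => (contrast_loss f x xp xs)%:E))%E.
Proof.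
pose Sv ts := expR (score x c) + \sum_(t <- ts) expR (score x t).
rewrite -(integral_dotv_affine c (f x) _
  (labels_mean N (fun ts => expR (score x c) / Sv ts - 1))).
apply: le_integral_nonmeasurable => xp.
  by apply: negs_int_ge0 => ys; rewrite lee_fin contrast_loss_ge0.
rewrite -labels_meanDM.
apply: (negs_int_ge_labels_mean (f x) _ _ _ (fun ts t => expR (score x t) / Sv ts)).
  by move=> ys; rewrite lee_fin contrast_loss_ge0.
move=> ts ys tsN ysN; rewrite lee_fin contrast_lossE.
have := @ln_sum_expR_tangent R _
  ((dotv (f x) (f xp), score x c) :: [seq (dotv (f x) (f p.2), score x p.1) | p <- zip ts ys])
  fst snd erefl.
have sum_ts : \sum_(p <- zip ts ys) expR (score x p.1) = \sum_(t <- ts) expR (score x t).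
  by rewrite -[in RHS](@unzip1_zip _ _ ts ys) ?tsN ?ysN // big_map.
have sum_ys : \sum_(p <- zip ts ys) expR (dotv (f x) (f p.2)) =
    \sum_(y <- ys) expR (dotv (f x) (f y)).
  by rewrite -[in RHS](@unzip2_zip _ _ ts ys) ?tsN ?ysN // big_map.
rewrite !big_cons !big_map /= sum_ts sum_ys -/(Sv ts) mulrDl.
have -> : \sum_(p <- zip ts ys)
    expR (score x p.1) / Sv ts * (dotv (f x) (f p.2) - dotv (f x) (mu p.1)) =
    (\sum_(p <- zip ts ys) expR (score x p.1) * (dotv (f x) (f p.2) - score x p.1)) / Sv ts.
  by rewrite mulr_suml; apply: eq_bigr => p _; rewrite mulrAC.
rewrite /mean_contrast -/(Sv ts) -/(score x c) mulrBl mul1r; lra.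
Qed.

Lemma mean_contrast_nseq x c N : mean_contrast x c (nseq N c) = ln N.+1%:R.
Proof.
rewrite /mean_contrast big_nseq iter_addr addr0 -mulrS -[_ *+ N.+1]mulr_natl.
by rewrite lnM ?posrE ?ltr0Sn ?expR_gt0 // expRK addrK.
Qed.

Lemma mean_contrast_mem x c c' ts :
  c' \in ts -> mean_contrast x c [:: c'] <= mean_contrast x c ts.
Proof.
move=> c'ts; rewrite /mean_contrast lerD2r big_seq1.
rewrite ler_ln ?posrE ?ltr_wpDr ?expR_gt0 ?sumr_ge0 // lerD2l.
by rewrite (big_rem c') //= lerDl sumr_ge0.
Qed.

Definition pair_loss c c' x := mean_contrast x c [:: c'].

Lemma labels_mean_mean_contrast_ge x c N : (1 < #|C|)%N ->
  @tau_plus R C N * ln N.+1%:R +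
    (1 - @tau_plus R C N) / (#|C|%:R - 1) * \sum_(c' | c' != c) pair_loss c c' x
  <= labels_mean N (mean_contrast x c).
Proof.
move=> C1; rewrite labels_meanE tau_plusE; last exact: ltnW.
have C0 : #|C|%:R != 0 :> R by rewrite pnatr_eq0 -lt0n ltnW.
have -> : #|C|%:R^-1 ^+ N * ln N.+1%:R + (1 - #|C|%:R^-1 ^+ N) / (#|C|%:R - 1) *
      \sum_(c' | c' != c) pair_loss c c' x =
    #|C|%:R^-1 ^+ N * (ln N.+1%:R + (#|C|%:R ^+ N - 1) / (#|C|%:R - 1) *
      \sum_(c' | c' != c) pair_loss c c' x).
  by rewrite exprVn; field; rewrite natrB1_neq0 // expf_neq0.
apply: ler_wpM2l; first by rewrite exprn_ge0 // invr_ge0.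
rewrite -(mean_contrast_nseq x c N).
exact: (sum_tuple_ge_nseq_mem c N _ _ C1 (fun t c' _ => @mean_contrast_mem x c c' t)).
Qed.

Lemma pair_loss_ge0 c c' x : 0 <= pair_loss c c' x.
Proof.
rewrite /pair_loss /mean_contrast big_seq1 subr_ge0 -[leLHS]expRK.
by rewrite ler_ln ?posrE ?addr_gt0 ?expR_gt0 // lerDl expR_ge0.
Qed.

Lemma pair_loss_le c c' x : pair_loss c c' x <= 1 + `|score x c' - score x c|.
Proof. by rewrite /pair_loss /mean_contrast big_seq1 lerBlDl addrCA addrA ln_expRD_le. Qed.

Lemma measurable_pair_loss c c' : measurable_fun setT (pair_loss c c').
Proof.
rewrite /pair_loss /mean_contrast; under eq_fun do rewrite big_seq1.
apply: measurable_realfun.measurable_funB; last exact: measurable_score.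
apply: measurableT_comp; first exact: measurable_realfun.measurable_ln.
by apply: measurable_realfun.measurable_funD; apply: measurableT_comp;
  [exact: measurable_realfun.measurable_expR | exact: measurable_score
  |exact: measurable_realfun.measurable_expR | exact: measurable_score].
Qed.

Lemma pair_loss_integrable c0 c c' :
  (D c0).-integrable setT (fun x => (pair_loss c c' x)%:E).
Proof.
have score_diff : (D c0).-integrable setT (fun x => (score x c' - score x c)%:E).
  by under eq_fun do rewrite EFinB; apply: integrableB; rewrite ?score_integrable.
apply: (le_integrable measurableT _ _ (integrableD measurableT
  (finite_measure_integrable_cst _ 1 measurableT) (integrable_abse score_diff))).
  exact/measurable_realfun.measurable_EFinP/measurable_pair_loss.
move=> x _ /=; rewrite lee_fin ger0_norm ?pair_loss_ge0 //.
by rewrite ger0_norm ?pair_loss_le // addr_ge0.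
Qed.

Definition pair_risk c c' : R := fine (\int[D c]_x (pair_loss c c' x)%:E)%E.

Lemma integral_pair_loss c c' :
  (\int[D c]_x (pair_loss c c' x)%:E)%E = (pair_risk c c')%:E.
Proof.
by rewrite fineK // (integrable_fin_num measurableT (pair_loss_integrable c c c')).
Qed.

Lemma mean_contrast_le_sum_pair_loss x c ts :
  mean_contrast x c ts <= \sum_(t <- ts) pair_loss c t x.
Proof.
have := ln_addr_sum_le (expR (score x c)) ts (fun t => expR (score x t)) (expR_gt0 _)
  (fun t => expR_ge0 (score x t)).
rewrite expRK => /le_trans; apply.
by apply: ler_sum => t _; rewrite /pair_loss /mean_contrast big_seq1.
Qed.

Lemma sup_loss_meanE (T : {set C}) x c : c \in T ->
  sup_loss f T mu x c = mean_contrast x c [seq c' <- index_enum C | (c' \in T) && (c' != c)].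
Proof.
move=> cT; rewrite /sup_loss /mean_contrast (bigD1 c cT) /= big_filter.
under eq_bigr do rewrite dotvC.
by rewrite dotvC oppr_ln_expR_div // ltr_wpDr ?expR_gt0 ?sumr_ge0.
Qed.

Lemma integral_sup_loss_mean_le (T : {set C}) c : c \in T ->
  (\int[D c]_x (sup_loss f T mu x c)%:E <=
   (\sum_(c' in T | c' != c) pair_risk c c')%:E)%E.
Proof.
move=> cT; rewrite -sumEFin; under eq_bigr do rewrite -integral_pair_loss.
rewrite -integral_sum //; last by move=> c'; exact: pair_loss_integrable.
apply: le_integral_nonmeasurable => x.
  by apply: sume_ge0 => c' _; rewrite lee_fin pair_loss_ge0.
rewrite sumEFin lee_fin sup_loss_meanE // -big_filter.
exact: mean_contrast_le_sum_pair_loss.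
Qed.

Lemma L_sup_k_le_L_sup_mu_k k : (L_sup_k D f k <= L_sup_mu_k D f k)%E.
Proof.
apply: lee_wpmul2l; first by rewrite lee_fin invr_ge0.
apply: lee_sum => T _.
by apply: ereal_inf_lbound; exists mu.
Qed.

Lemma L_sup_mu_k_le_pair_risks k : (1 < #|C|)%N -> (k.+1 <= #|C|)%N ->
  (L_sup_mu_k D f k <= (k%:R / (#|C|%:R * (#|C|%:R - 1)) *
     \sum_(c : C) \sum_(c' | c' != c) pair_risk c c')%:E)%E.
Proof.
move=> C1 kC; rewrite -mean_tasks_pairs // EFinM.
apply: lee_wpmul2l; first by rewrite lee_fin invr_ge0.
rewrite -sumEFin; apply: lee_sum => T T_k.
rewrite -sumEFin; apply: lee_sum => c cT.
rewrite (rho_cond_task _ _ c T_k) EFinM; apply: lee_wpmul2l; first by rewrite lee_fin invr_ge0.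
exact: integral_sup_loss_mean_le.
Qed.

Lemma class_L_un_ge_pair_risks N c : (1 < #|C|)%N ->
  ((@tau_plus R C N * ln N.+1%:R + (1 - @tau_plus R C N) / (#|C|%:R - 1) *
     \sum_(c' | c' != c) pair_risk c c')%:E <=
   \int[D c]_x \int[D c]_xp negs_int D N (fun xs => (contrast_loss f x xp xs)%:E))%E.
Proof.
move=> C1; set a := _ * ln _; set b := _ / _.
have sum_int : (D c).-integrable setT
    (fun x => \sum_(c' | c' != c) (pair_loss c c' x)%:E)%E.
  by apply: integrable_sum => // c' _; exact: pair_loss_integrable.
have -> : (a + b * \sum_(c' | c' != c) pair_risk c c')%:E =
    (\int[D c]_x (cst a%:E x + b%:E * \sum_(c' | c' != c) (pair_loss c c' x)%:E))%E.
  rewrite integralD //; last 2 first.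
  - exact: finite_measure_integrable_cst.
  - exact: integrableZl.
  rewrite integralZl // integral_sum //; last by move=> c'; exact: pair_loss_integrable.
  rewrite (eq_bigr (fun c' => (pair_risk c c')%:E)) => [|c' _]; last exact: integral_pair_loss.
  rewrite integral_cst //= [X in (_ * X)%E](_ : _ = 1%E); last exact: probability_setT.
  by rewrite mule1 sumEFin -EFinM -EFinD.
apply: le_integral_nonmeasurable => x.
  by apply: integral_ge0 => xp _; apply: negs_int_ge0 => ys; rewrite lee_fin contrast_loss_ge0.
apply: le_trans (integral_negs_contrast_loss_ge x c N).
by rewrite /= sumEFin -EFinM -EFinD lee_fin labels_mean_mean_contrast_ge.
Qed.

Lemma L_un_ge_pair_risks N : (1 < #|C|)%N ->
  ((@tau_plus R C N * ln N.+1%:R + (1 - @tau_plus R C N) / (#|C|%:R * (#|C|%:R - 1)) *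
     \sum_(c : C) \sum_(c' | c' != c) pair_risk c c')%:E <= L_un D f N)%E.
Proof.
move=> C1; set a := _ * ln _; set t := @tau_plus R C N.
have C0 : #|C|%:R != 0 :> R by rewrite pnatr_eq0 -lt0n ltnW.
have -> : a + (1 - t) / (#|C|%:R * (#|C|%:R - 1)) *
      \sum_(c : C) \sum_(c' | c' != c) pair_risk c c' =
    \sum_(c : C) @rho R C c * (a + (1 - t) / (#|C|%:R - 1) *
      \sum_(c' | c' != c) pair_risk c c').
  under [RHS]eq_bigr do rewrite rhoE mulrDr.
  rewrite big_split /= sumr_const (_ : #|xpredT| = #|C|) // -[_ *+ #|C|]mulr_natr.
  by rewrite -!mulr_sumr; field; rewrite natrB1_neq0 // C0.
rewrite -sumEFin; apply: lee_sum => c _.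
rewrite EFinM; apply: lee_wpmul2l; first by rewrite lee_fin rho_ge0.
exact: class_L_un_ge_pair_risks.
Qed.

End Encoder.

Theorem proposition3p3 (R : realType) (dX : measure_display) (X : measurableType dX)
  (C : finType) (dim : nat) (D : C -> probability X R) (f : X -> 'rV[R]_dim)
  (f_int : forall (c : C) (i : 'I_dim),
     (D c).-integrable [set: X] (fun x => (f x 0 i)%:E))
  (N k : nat) (hN : (1 <= N)%N) (hk : (2 <= k.+1)%N) (hkC : (k.+1 <= #|C|)%N) :
  (L_sup_k D f k <= L_sup_mu_k D f k)%E /\
  (L_sup_mu_k D f k <=
     ((k%:R / (1 - @tau_plus R C N))%:E *
      (L_un D f N - (@tau_plus R C N * ln (N.+1)%:R)%:E))%E)%E.
Proof.
have C1 : (1 < #|C|)%N := leq_trans hk hkC.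
split; first exact: L_sup_k_le_L_sup_mu_k.
set t := @tau_plus R C N; set S := \sum_(c : C) \sum_(c' | c' != c) pair_risk D f c c'.
have t_lt1 : t < 1.
  have C0 : (0 < #|C|)%N := ltnW C1.
  rewrite /t tau_plusE // exprVn invf_lt1 ?exprn_gt0 ?ltr0n //.
  by rewrite exprn_egt1 ?ltr1n // -lt0n.
apply: le_trans (L_sup_mu_k_le_pair_risks D f f_int k C1 hkC) _.
have -> : k%:R / (#|C|%:R * (#|C|%:R - 1)) * S =
    k%:R / (1 - t) * ((1 - t) / (#|C|%:R * (#|C|%:R - 1)) * S).
  by field; rewrite natrB1_neq0 // pnatr_eq0 -lt0n ltnW // gt_eqF ?subr_gt0.
rewrite EFinM; apply: lee_wpmul2l; first by rewrite lee_fin divr_ge0 // subr_ge0 (ltW t_lt1).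
by rewrite leeBrDl // -EFinD (L_un_ge_pair_risks D f f_int N C1).
Qed.
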